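(* Let $\mathbf x_1,\dots,\mathbf x_l\in\mathbb{R}^n$, $y_1,\dots,y_l\in\mathbb{R}$, let $\mathbf X\in\mathbb{R}^{l\times n}$ have $i$-th row $\mathbf x_i^T$ and $\mathbf y=(y_1,\dots,y_l)^T$. For $C>0$ consider the least absolute deviations problem $$\min_{\mathbf w}\tfrac12\|\mathbf w\|^2+C\sum_{i=1}^l|y_i-\mathbf w^T\mathbf x_i|$$ with optimal solution $\mathbf w^*(C)$, and its dual $\min_{\theta\in[-1,1]^l}\frac C2\|\mathbf X^T\theta\|^2-\langle\mathbf y,\theta\rangle$ with optimal solution $\theta^*(C)$. Let $0<C_1<\dots<C_{\mathcal K}$ and suppose $\theta^*(C_k)$ is known for some integer $1\le k<\mathcal K$. Then $[\theta^*(C_{k+1})]_i=-1$ (i.e., $i\in\mathcal R$) if $$\tfrac{C_{k+1}+C_k}{2}\langle\mathbf X^T\theta^*(C_k),\mathbf x_i\rangle-\tfrac{C_{k+1}-C_k}{2}\|\mathbf X^T\theta^*(C_k)\|\,\|\mathbf x_i\|>y_i,$$ and $[\theta^*(C_{k+1})]_i=1$ (i.e., $i\in\mathcal L$) if $$\tfrac{C_{k+1}+C_k}{2}\langle\mathbf X^T\theta^*(C_k),\mathbf x_i\rangle+\tfrac{C_{k+1}-C_k}{2}\|\mathbf X^T\theta^*(C_k)\|\,\|\mathbf x_i\|<y_i.$$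
   Context: Primal and dual solutions satisfy $\mathbf w^*(C)=C\mathbf X^T\theta^*(C)$. At parameter $C=C_{k+1}$: $\mathcal R=\{i:\langle\mathbf w^*(C),\mathbf x_i\rangle>y_i\}$ and $\mathcal L=\{i:\langle\mathbf w^*(C),\mathbf x_i\rangle<y_i\}$. *)

From HB Require Import structures.
From mathcomp Require Import all_boot all_order all_algebra.
Set Implicit Arguments. Unset Strict Implicit. Unset Printing Implicit Defensive.
Import Order.TTheory GRing.Theory Num.Theory.
Local Open Scope ring_scope.

Section LAD.
Variable R : rcfType.

Definition dotv (n : nat) (u v : 'cV[R]_n) : R := \sum_(j < n) u j 0 * v j 0.
Definition normv (n : nat) (u : 'cV[R]_n) : R := Num.sqrt (dotv u u).

Definition rowvec (l n : nat) (X : 'M[R]_(l, n)) (i : 'I_l) : 'cV[R]_n := (row i X)^T.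

Definition primal_obj (l n : nat) (X : 'M[R]_(l, n)) (y : 'cV[R]_l) (C : R)
  (w : 'cV[R]_n) : R :=
  2^-1 * normv w ^+ 2 + C * \sum_(i < l) `|y i 0 - dotv w (rowvec X i)|.

Definition primal_opt (l n : nat) (X : 'M[R]_(l, n)) (y : 'cV[R]_l) (C : R)
  (w : 'cV[R]_n) : Prop :=
  forall w', primal_obj X y C w <= primal_obj X y C w'.

Definition in_box (l : nat) (t : 'cV[R]_l) : Prop := forall i, -1 <= t i 0 <= 1.

Definition dual_obj (l n : nat) (X : 'M[R]_(l, n)) (y : 'cV[R]_l) (C : R)
  (t : 'cV[R]_l) : R :=
  C / 2 * normv (X^T *m t) ^+ 2 - dotv y t.

Definition dual_opt (l n : nat) (X : 'M[R]_(l, n)) (y : 'cV[R]_l) (C : R)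
  (t : 'cV[R]_l) : Prop :=
  in_box t /\ forall t', in_box t' -> dual_obj X y C t <= dual_obj X y C t'.

End LAD.

(* Optimality of theta over the convex box [-1,1]^l is the variational inequality
   <C X X^T theta - y, theta' - theta> >= 0 for all theta' in the box.  Adding the
   inequalities at C_k (tested against theta*(C_{k+1})) and at C_{k+1} (tested
   against theta*(C_k)) places w*(C_{k+1}) = C_{k+1} X^T theta*(C_{k+1}) in the ball
   of centre (C_{k+1} + C_k)/2 X^T theta*(C_k) and radius (C_{k+1} - C_k)/2
   ||X^T theta*(C_k)||; Cauchy-Schwarz then bounds <w*(C_{k+1}), x_i> on either side
   by the two screening quantities.  Finally, testing the variational inequality
   along the i-th coordinate shows that <w*, x_i> > y_i forces theta_i = -1 and
   <w*, x_i> < y_i forces theta_i = 1. *)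
From HB Require Import structures.
From mathcomp Require Import all_boot all_order all_algebra.
From mathcomp Require Import ring lra.
Import Order.TTheory GRing.Theory Num.Theory.
Local Open Scope ring_scope.
Set Implicit Arguments. Unset Strict Implicit. Unset Printing Implicit Defensive.

Section InnerProduct.
Variables (R : rcfType) (m : nat).
Implicit Types u v w : 'cV[R]_m.

Lemma dotvC u v : dotv u v = dotv v u.
Proof. by apply: eq_bigr => j _; rewrite mulrC. Qed.

Lemma dotvDl u v w : dotv (u + v) w = dotv u w + dotv v w.
Proof. by rewrite /dotv -big_split; apply: eq_bigr => j _; rewrite mxE mulrDl. Qed.

Lemma dotvZl (a : R) u v : dotv (a *: u) v = a * dotv u v.
Proof. by rewrite /dotv mulr_sumr; apply: eq_bigr => j _; rewrite mxE mulrA. Qed.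

Lemma dotvNl u v : dotv (- u) v = - dotv u v.
Proof. by rewrite -scaleN1r dotvZl mulN1r. Qed.

Lemma dotvDr u v w : dotv w (u + v) = dotv w u + dotv w v.
Proof. by rewrite dotvC dotvDl !(dotvC w). Qed.

Lemma dotvZr (a : R) u v : dotv v (a *: u) = a * dotv v u.
Proof. by rewrite dotvC dotvZl dotvC. Qed.

Lemma dotvNr u v : dotv v (- u) = - dotv v u.
Proof. by rewrite dotvC dotvNl dotvC. Qed.

Lemma dotv_ge0 u : 0 <= dotv u u.
Proof. by apply: sumr_ge0 => j _; rewrite -expr2 sqr_ge0. Qed.

Lemma normv_ge0 u : 0 <= normv u.
Proof. exact: sqrtr_ge0. Qed.

Lemma normv_sqr u : normv u ^+ 2 = dotv u u.
Proof. by rewrite /normv sqr_sqrtr // dotv_ge0. Qed.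

Lemma dotv_eq0 u v : dotv u u = 0 -> dotv u v = 0.
Proof.
move=> /eqP; rewrite /dotv psumr_eq0 => [/allP u0|j _]; last by rewrite -expr2 sqr_ge0.
apply: big1 => j _; move: (u0 j (mem_index_enum j)) => /implyP /(_ isT).
by rewrite mulf_eq0 orbb => /eqP ->; rewrite mul0r.
Qed.

Lemma dotv_sqr_le u v : dotv u v ^+ 2 <= dotv u u * dotv v v.
Proof.
have [v0|v_neq0] := eqVneq (dotv v v) 0.
  by rewrite dotvC (dotv_eq0 u v0) v0 mulr0 expr0n.
have v_gt0 : 0 < dotv v v by rewrite lt0r v_neq0 dotv_ge0.
(* expand the square norm of the projection residual u - (<u,v>/<v,v>) v *)
have := dotv_ge0 (u - (dotv u v / dotv v v) *: v).
rewrite !dotvDl !dotvDr !dotvNl !dotvNr !dotvZl !dotvZr (dotvC v u).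
set P := dotv u u; set Q := dotv u v; set D := dotv v v.
have -> : P - Q / D * Q + (- (Q / D * Q) - - (Q / D * (Q / D * D)))
    = (P * D - Q ^+ 2) / D by field; rewrite /D v_neq0.
by rewrite pmulr_lge0 ?invr_gt0 // subr_ge0.
Qed.

Lemma dotv_le_normv u v : `|dotv u v| <= normv u * normv v.
Proof.
rewrite /normv -sqrtrM ?dotv_ge0 // -(sqrtr_sqr (dotv u v)).
by rewrite ler_sqrt ?dotv_sqr_le // mulr_ge0 // dotv_ge0.
Qed.

Lemma normv_le_scale (a : R) u v :
  0 <= a -> dotv v v <= a ^+ 2 * dotv u u -> normv v <= a * normv u.
Proof.
move=> a_ge0 vu; rewrite /normv -(ger0_norm a_ge0) -sqrtr_sqr -sqrtrM ?sqr_ge0 //.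
by rewrite ler_sqrt // mulr_ge0 ?sqr_ge0 // dotv_ge0.
Qed.

End InnerProduct.

Lemma slope_ge0_of_quadratic_ge0 (R : rcfType) (a b : R) : 0 <= b ->
  (forall s, 0 < s -> s <= 1 -> 0 <= s * a + s ^+ 2 * b) -> 0 <= a.
Proof.
move=> b_ge0 quad_ge0; rewrite leNgt; apply/negP => a_lt0.
have D_gt0 : 0 < b + 1 - a by lra.
(* at s = -a / (b + 1 - a) the quadratic equals -s^2 (1 - a) < 0 *)
pose s := - a / (b + 1 - a).
have s_gt0 : 0 < s by rewrite divr_gt0 // oppr_gt0.
have sD : s * (b + 1 - a) = - a by rewrite /s divfK ?gt_eqF.
have s_le1 : s <= 1 by rewrite ler_pdivrMr // mul1r; lra.
by have := quad_ge0 s s_gt0 s_le1; nra.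
Qed.

Lemma increasing_gt0 (R : rcfType) (C : nat -> R) (K : nat) :
  0 < C 1%N -> (forall j, (1 <= j)%N -> (j < K)%N -> C j < C j.+1) ->
  forall j, (1 <= j <= K)%N -> 0 < C j.
Proof.
move=> C1_gt0 C_incr; elim=> [//|[//|j] IH] /andP[_ jK].
exact: lt_trans (IH (ltnW jK)) (C_incr j.+1 isT jK).
Qed.

Section Dual.
Variables (R : rcfType) (l n : nat) (X : 'M[R]_(l, n)) (y : 'cV[R]_l).

Lemma in_box_convex (t t' : 'cV[R]_l) (s : R) : 0 <= s <= 1 ->
  in_box t -> in_box t' -> in_box (t + s *: (t' - t)).
Proof.
move=> /andP[s_ge0 s_le1] box_t box_t' j; rewrite !mxE.
have /andP[t1 t2] := box_t j; have /andP[t'1 t'2] := box_t' j.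
apply/andP; split; nra.
Qed.

Lemma dual_objD C (t d : 'cV[R]_l) s :
  dual_obj X y C (t + s *: d) = dual_obj X y C t
    + s * (C * dotv (X^T *m t) (X^T *m d) - dotv y d)
    + s ^+ 2 * (C / 2 * dotv (X^T *m d) (X^T *m d)).
Proof.
rewrite /dual_obj !normv_sqr mulmxDr -scalemxAr.
rewrite !dotvDl !dotvDr !dotvZl !dotvZr (dotvC (X^T *m d)).
by field.
Qed.

Lemma dual_opt_variational C (t t' : 'cV[R]_l) : 0 <= C ->
  dual_opt X y C t -> in_box t' ->
  0 <= C * dotv (X^T *m t) (X^T *m (t' - t)) - dotv y (t' - t).
Proof.
move=> C_ge0 [box_t t_min] box_t'.
apply: (slope_ge0_of_quadratic_ge0 (b := C / 2 * dotv (X^T *m (t' - t)) (X^T *m (t' - t)))).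
  by rewrite mulr_ge0 ?dotv_ge0 // divr_ge0.
move=> s s_gt0 s_le1.
have /t_min : in_box (t + s *: (t' - t)).
  by apply: in_box_convex => //; rewrite (ltW s_gt0) s_le1.
by rewrite dual_objD; lra.
Qed.

Lemma dotv_delta (v : 'cV[R]_l) i c : dotv v (c *: delta_mx i 0) = c * v i 0.
Proof.
rewrite /dotv (bigD1 i) //= big1 ?addr0 => [|j ji].
  by rewrite !mxE !eqxx mulr1 mulrC.
by rewrite !mxE (negbTE ji) !mulr0.
Qed.

Lemma dual_opt_coord_variational C (t : 'cV[R]_l) i (v : R) : 0 <= C ->
  dual_opt X y C t -> -1 <= v <= 1 ->
  0 <= (v - t i 0) * (C * dotv (X^T *m t) (rowvec X i) - y i 0).
Proof.
move=> C_ge0 t_opt v_box.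
pose t' := t + (v - t i 0) *: delta_mx i 0.
have box_t' : in_box t'.
  move=> j; rewrite !mxE; have [->|ji] := eqVneq j i.
    by rewrite eqxx mulr1 addrC subrK.
  by rewrite mulr0 addr0; exact: t_opt.1.
have := dual_opt_variational C_ge0 t_opt box_t'.
rewrite /t' addrAC subrr add0r dotv_delta -scalemxAr dotvZr.
by rewrite /rowvec tr_row -colE; lra.
Qed.

Lemma dual_opt_coord_eqN1 C (t : 'cV[R]_l) i : 0 <= C -> dual_opt X y C t ->
  y i 0 < C * dotv (X^T *m t) (rowvec X i) -> t i 0 = -1.
Proof.
move=> C_ge0 t_opt y_lt; have /andP[t_ge t_le] := t_opt.1 i.
have := dual_opt_coord_variational (v := -1) i C_ge0 t_opt.
rewrite lexx (le_trans (lerN10 _) ler01) => /(_ isT); rewrite pmulr_lge0 ?subr_gt0 // subr_ge0 => t_le'.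
by apply/eqP; rewrite eq_le t_le' t_ge.
Qed.

Lemma dual_opt_coord_eq1 C (t : 'cV[R]_l) i : 0 <= C -> dual_opt X y C t ->
  C * dotv (X^T *m t) (rowvec X i) < y i 0 -> t i 0 = 1.
Proof.
move=> C_ge0 t_opt lt_y; have /andP[t_ge t_le] := t_opt.1 i.
have := dual_opt_coord_variational (v := 1) i C_ge0 t_opt.
rewrite lexx (le_trans (lerN10 _) ler01) => /(_ isT).
rewrite nmulr_lge0 ?subr_lt0 // subr_le0 => t_ge'.
by apply/eqP; rewrite eq_le t_le t_ge'.
Qed.

Section TwoParameters.
Variables (c0 c1 : R) (t0 t1 : 'cV[R]_l).
Hypotheses (c0_ge0 : 0 <= c0) (c0_le_c1 : c0 <= c1).
Hypotheses (t0_opt : dual_opt X y c0 t0) (t1_opt : dual_opt X y c1 t1).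

Let u0 := X^T *m t0.
Let u1 := X^T *m t1.

Lemma dual_opt_monotone :
  0 <= (c0 + c1) * dotv u0 u1 - c0 * dotv u0 u0 - c1 * dotv u1 u1.
Proof.
have c1_ge0 : 0 <= c1 := le_trans c0_ge0 c0_le_c1.
have vi0 := dual_opt_variational c0_ge0 t0_opt t1_opt.1.
have vi1 := dual_opt_variational c1_ge0 t1_opt t0_opt.1.
rewrite !mulmxBr !dotvDr !dotvNr -/u0 -/u1 in vi0 vi1.
rewrite (dotvC u1 u0) in vi1; lra.
Qed.

Lemma dual_opt_ball :
  normv (c1 *: u1 - ((c1 + c0) / 2) *: u0) <= (c1 - c0) / 2 * normv u0.
Proof.
have c1_ge0 : 0 <= c1 := le_trans c0_ge0 c0_le_c1.
apply: normv_le_scale; first by rewrite divr_ge0 // subr_ge0.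
have -> : dotv (c1 *: u1 - ((c1 + c0) / 2) *: u0) (c1 *: u1 - ((c1 + c0) / 2) *: u0)
    = ((c1 - c0) / 2) ^+ 2 * dotv u0 u0
      - c1 * ((c0 + c1) * dotv u0 u1 - c0 * dotv u0 u0 - c1 * dotv u1 u1).
  rewrite !dotvDl !dotvDr !dotvNl !dotvNr !dotvZl !dotvZr (dotvC u1 u0).
  by field.
by rewrite lerBlDr lerDl mulr_ge0 ?dual_opt_monotone.
Qed.

Lemma dual_opt_dotv_bound (x : 'cV[R]_n) :
  `|c1 * dotv u1 x - (c1 + c0) / 2 * dotv u0 x|
    <= (c1 - c0) / 2 * normv u0 * normv x.
Proof.
rewrite -!dotvZl -dotvNl -dotvDl.
apply: le_trans (dotv_le_normv _ _) _.
by rewrite ler_wpM2r ?normv_ge0 ?dual_opt_ball.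
Qed.

End TwoParameters.
End Dual.

Theorem corollary5 (R : rcfType) (l n : nat) (X : 'M[R]_(l, n)) (y : 'cV[R]_l)
  (C : nat -> R) (K k : nat)
  (hC0 : 0 < C 1%N)
  (hCinc : forall j, (1 <= j)%N -> (j < K)%N -> C j < C j.+1)
  (hk : (1 <= k < K)%N)
  (thk thk1 : 'cV[R]_l)
  (hthk : dual_opt X y (C k) thk)
  (hthk1 : dual_opt X y (C k.+1) thk1) :
  forall i : 'I_l,
    ((C k.+1 + C k) / 2 * dotv (X^T *m thk) (rowvec X i)
       - (C k.+1 - C k) / 2 * normv (X^T *m thk) * normv (rowvec X i) > y i 0 ->
     thk1 i 0 = -1)
  /\
    ((C k.+1 + C k) / 2 * dotv (X^T *m thk) (rowvec X i)
       + (C k.+1 - C k) / 2 * normv (X^T *m thk) * normv (rowvec X i) < y i 0 ->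
     thk1 i 0 = 1).
Proof.
move=> i; case/andP: hk => k_ge1 k_lt_K.
have Ck_gt0 : 0 < C k by apply: (increasing_gt0 hC0 hCinc); rewrite k_ge1 ltnW.
have Ck_lt : C k < C k.+1 := hCinc k k_ge1 k_lt_K.
have Ck1_ge0 : 0 <= C k.+1 := ltW (lt_trans Ck_gt0 Ck_lt).
have /ler_normlP[lower upper] :=
  dual_opt_dotv_bound (ltW Ck_gt0) (ltW Ck_lt) hthk hthk1 (rowvec X i).
split=> screen.
- by apply: dual_opt_coord_eqN1 Ck1_ge0 hthk1 _; lra.
- by apply: dual_opt_coord_eq1 Ck1_ge0 hthk1 _; lra.
Qed.
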